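(* Let $\mathcal{M}$ be a matroid on $[n]$, $\ell$ an integer, and $\gamma$ an $\ell$-cover of $\mathcal{M}$. Let $F$ be a focal basis of $\gamma$ and let $G\in\mathcal{B}(\mathcal{M})$. Then: (1) For any $A\subseteq F-G$ and any $B\subseteq G-F$ such that $(F-A)\cup B\in\mathcal{B}(\mathcal{M})$, we have $\gamma(A)\leq\gamma(B)$, and if $A\subseteq\operatorname{supp}\gamma$ then $B\subseteq\operatorname{supp}\gamma$. (2) For any bijection $\sigma:F-G\to G-F$ such that $(F-i)\cup\sigma(i)\in\mathcal{B}(\mathcal{M})$ for every $i\in F-G$ (such a bijection always exists), we have $\gamma(i)\leq\gamma(\sigma(i))$ for all $i\in F-G$. Suppose moreover that $G$ is also a focal basis of $\gamma$. Then: (3) If $A,B$ are as in (1) and additionally $(G-B)\cup A\in\mathcal{B}(\mathcal{M})$, then $\gamma(A)=\gamma(B)$, and $A\subseteq\operatorname{supp}\gamma$ if and only if $B\subseteq\operatorname{supp}\gamma$. (4) For $\sigma$ as in (2), $\gamma(i)=\gamma(\sigma(i))$ for all $i\in F-G$.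
   Context: $\mathcal{B}(\mathcal{M})$ is the set of bases of $\mathcal{M}$. For $\gamma:[n]\to\mathbb{N}_0$ and $S\subseteq[n]$, $\gamma(S)=\sum_{i\in S}\gamma(i)$ and $\operatorname{supp}\gamma=\{i:\gamma(i)>0\}$. $\gamma$ is an $\ell$-cover of $\mathcal{M}$ if $\gamma(F)\geq\ell$ for every basis $F$. A basis $F$ is a focal basis of $\gamma$ if $\gamma(F)=\ell$. *)

From mathcomp Require Import all_boot all_order all_algebra.
Set Implicit Arguments. Unset Strict Implicit. Unset Printing Implicit Defensive.
Import GRing.Theory Num.Theory.

Definition basis_exchange (n : nat) (B : {set {set 'I_n}}) : Prop :=
  forall B1 B2, B1 \in B -> B2 \in B ->
    forall x, x \in B1 :\: B2 ->
      exists2 y, y \in B2 :\: B1 & (B1 :\ x) :|: [set y] \in B.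

Record matroid (n : nat) := Matroid {
  bases : {set {set 'I_n}};
  bases_nonempty : bases != set0;
  bases_exchange : basis_exchange bases }.

Definition wt (n : nat) (g : 'I_n -> nat) (S : {set 'I_n}) : nat :=
  \sum_(i in S) g i.

Definition supp (n : nat) (g : 'I_n -> nat) : {set 'I_n} := [set i | 0 < g i].

Definition is_cover (n : nat) (M : matroid n) (l : int) (g : 'I_n -> nat) : Prop :=
  forall F, F \in bases M -> (l <= Posz (wt g F))%R.

Definition focal (n : nat) (M : matroid n) (l : int) (g : 'I_n -> nat)
  (F : {set 'I_n}) : Prop :=
  F \in bases M /\ Posz (wt g F) = l.

Definition exch_bij (n : nat) (M : matroid n) (F G : {set 'I_n})
  (sigma : 'I_n -> 'I_n) : Prop :=
  [/\ {in F :\: G &, injective sigma},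
      sigma @: (F :\: G) = G :\: F &
      forall i, i \in F :\: G -> (F :\ i) :|: [set sigma i] \in bases M].

From mathcomp Require Import all_boot all_order all_algebra.
Set Implicit Arguments. Unset Strict Implicit. Unset Printing Implicit Defensive.

(* Exchanging A for B in the focal basis F yields a basis, whose weight is at
   least l = g(F); this is the inequality in (1). Symmetric exchange pairs each
   b in B with some a in A such that F - a + b is a basis, so g a <= g b, which
   gives the support claim, and iterated symmetric exchange builds the
   bijection of (2). When G is focal too, g(F - G) = g(G - F), so the termwise
   inequalities g i <= g (sigma i) must all be equalities. *)

Section SetSwap.
Variable T : finType.
Implicit Types (S C : {set T}) (x y : T).

Lemma cards_swap S x y : x \in S -> y \notin S -> #|S :\ x :|: [set y]| = #|S|.
Proof.
move=> xS yS; rewrite setUC cardsU1 (cardsD1 x S) xS.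
by rewrite inE (negbTE yS) andbF.
Qed.

Lemma setD_swapl S C x y : y \in C -> (S :\ x :|: [set y]) :\: C = (S :\: C) :\ x.
Proof.
move=> yC; apply/setP => z; rewrite !inE.
case: (z =P y) => [->|_]; first by rewrite yC /= andbF.
by rewrite orbF andbCA.
Qed.

Lemma setD_swapr S C x y : x \notin C -> C :\: (S :\ x :|: [set y]) = (C :\: S) :\ y.
Proof.
move=> xC; apply/setP => z; rewrite !inE.
case: (z =P x) => [->|_]; first by rewrite (negbTE xC) !andbF.
by case: (z \in S); case: (z == y).
Qed.

Lemma swapK S x y : x \in S -> y \notin S -> (S :\ x :|: [set y]) :\ y :|: [set x] = S.
Proof.
move=> xS yS; apply/setP => z; rewrite !inE.
case: (z =P x) => [->|_]; first by rewrite xS orbT.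
by case: (z =P y) => [->|_]; rewrite ?(negbTE yS) ?orbF.
Qed.

Lemma swap_of_card S C x : x \in S -> x \notin C -> S :\ x \subset C ->
  #|C| = #|S| -> exists2 y, y \in C :\: S & C = S :\ x :|: [set y].
Proof.
move=> xS xC sSC cardC.
have : ~~ (C \subset S :\ x).
  by apply: contraTN isT => /subset_leq_card; rewrite cardC (cardsD1 x S) xS ltnn.
case/subsetPn => y yC ySx.
have yx : y != x by apply: contraNneq xC => <-.
have yS : y \notin S by move: ySx; rewrite in_setD1 yx.
exists y; first by rewrite inE yC yS.
apply/esym/eqP; rewrite eqEcard cards_swap // cardC leqnn andbT.
by rewrite subUset sSC sub1set.
Qed.

Lemma disjoint_setD S C : [disjoint S :\: C & C].
Proof. by rewrite disjoints_subset setDE subsetIr. Qed.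

Lemma injective_setU1 (U : finType) (f : T -> U) (D : {set T}) x :
  {in D &, injective f} -> f x \notin f @: D -> {in x |: D &, injective f}.
Proof.
move=> injf fxD i j; rewrite !in_setU1.
have neq_fx k : k \in D -> f k != f x.
  by move=> kD; apply: contraNneq fxD => <-; apply: imset_f.
case/predU1P=> [->|iD] /predU1P[->|jD] // => [fx_fj|fi_fx|]; last exact: injf.
- by have := neq_fx j jD; rewrite fx_fj eqxx.
- by have := neq_fx i iD; rewrite fi_fx eqxx.
Qed.

End SetSwap.

Section Matroid.
Variables (n : nat) (M : matroid n).
Implicit Types (B P Q I : {set 'I_n}).

Lemma basis_subset_eq B1 B2 :
  B1 \in bases M -> B2 \in bases M -> B1 \subset B2 -> B1 = B2.
Proof.
move=> hB1 hB2 sB12; apply/eqP; rewrite eqEsubset sB12 /=.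
apply/subsetP => z zB2; apply: contraT => zB1.
have zD : z \in B2 :\: B1 by rewrite inE zB1.
have [y] := bases_exchange hB2 hB1 zD.
by rewrite inE => /andP[/negP yB2 /(subsetP sB12)].
Qed.

Lemma card_bases B1 B2 : B1 \in bases M -> B2 \in bases M -> #|B1| = #|B2|.
Proof.
move: {2}#|B1 :\: B2| (erefl #|B1 :\: B2|) => k.
elim: k B1 => [|k IH] B1 cardD hB1 hB2.
  by move/eqP: cardD; rewrite cards_eq0 setD_eq0 => /(basis_subset_eq hB1 hB2) ->.
have [x xD] : exists x, x \in B1 :\: B2 by apply/set0Pn; rewrite -card_gt0 cardD.
have [y yD hB] := bases_exchange hB1 hB2 xD.
move: (xD) (yD); rewrite !inE => /andP[_ xB1] /andP[yB1 yB2].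
rewrite -(cards_swap xB1 yB1); apply: IH => //.
by rewrite setD_swapl //; move: cardD; rewrite (cardsD1 x) xD => -[].
Qed.

(* Take a basis containing I that has as few elements outside I :|: B as
   possible; an element outside can be exchanged for one of B. *)
Lemma extend_to_basis I B0 B : B0 \in bases M -> I \subset B0 -> B \in bases M ->
  exists B', [/\ B' \in bases M, I \subset B' & B' \subset I :|: B].
Proof.
move=> hB0 sIB0 hB.
pose P C := (C \in bases M) && (I \subset C).
have PB0 : P B0 by rewrite /P hB0 sIB0.
case: (arg_minnP (fun C => #|C :\: (I :|: B)|) PB0) => B' /andP[hB' sIB'] minB'.
exists B'; split=> //; rewrite -setD_eq0; apply: contraTT isT => /set0Pn[z zD].
move: (zD); rewrite !inE negb_or => /andP[/andP[zI zB] zB'].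
have zB'B : z \in B' :\: B by rewrite inE zB zB'.
have [y yD hB'y] := bases_exchange hB' hB zB'B.
have yIB : y \in I :|: B by move: yD; rewrite !inE => /andP[_ ->]; rewrite orbT.
have := minB' (B' :\ z :|: [set y]); rewrite setD_swapl // (cardsD1 z (B' :\: _)) zD ltnn.
apply; rewrite /P hB'y /=; apply/subsetP => w wI.
by rewrite !inE (subsetP sIB' _ wI) andbT; case: (w =P z) => // wz; rewrite -wz wI in zI.
Qed.

(* With Z the set of y in Q for which Q - y + x is a basis, no basis
   containing Z contains x; a basis spanned by Z and P, extended from P - x,
   then supplies the element y of Z. *)
Lemma symmetric_exchange P Q x : P \in bases M -> Q \in bases M -> x \in P :\: Q ->
  exists2 y, y \in Q :\: P &
    P :\ x :|: [set y] \in bases M /\ Q :\ y :|: [set x] \in bases M.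
Proof.
move=> hP hQ; rewrite inE => /andP[xQ xP].
pose Z := [set y in Q | Q :\ y :|: [set x] \in bases M].
have sZQ : Z \subset Q by apply/subsetP => y; rewrite inE => /andP[].
have Z_avoids_x B : B \in bases M -> Z \subset B -> x \notin B.
  move=> hB sZB; apply/negP => xB.
  have sxZB : x |: Z \subset B by rewrite subUset sub1set xB.
  have [B' [hB' sxZB' sB'xQ]] := extend_to_basis hB sxZB hQ.
  have xB' : x \in B' by rewrite (subsetP sxZB') ?setU11.
  have sB'Q : B' :\ x \subset Q.
    apply/subsetP => z; rewrite in_setD1 => /andP[zx /(subsetP sB'xQ)].
    by rewrite in_setU in_setU1 (negbTE zx) /= => /orP[/(subsetP sZQ)|].
  have [y] := swap_of_card xB' xQ sB'Q (card_bases hQ hB').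
  rewrite inE => /andP[yB' yQ] defQ.
  have yZ : y \in Z by rewrite inE yQ defQ swapK.
  by case/negP: yB'; apply: (subsetP sxZB'); rewrite in_setU1 yZ orbT.
have [B' [hB' sZB' sB'ZP]] := extend_to_basis hQ sZQ hP.
have [B'' [hB'' sPB'' sB''PB']] := extend_to_basis hP (subD1set P x) hB'.
have xB'' : x \notin B''.
  by apply: contra (Z_avoids_x _ hB' sZB') => /(subsetP sB''PB'); rewrite !inE eqxx.
have [y] := swap_of_card xP xB'' sPB'' (card_bases hB'' hP).
rewrite inE => /andP[yP yB''] defB''.
have yB' : y \in B'.
  by move: (subsetP sB''PB' y yB''); rewrite in_setU in_setD1 (negbTE yP) andbF.
have : y \in Z by move: (subsetP sB'ZP y yB'); rewrite in_setU (negbTE yP) orbF.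
rewrite inE => /andP[yQ hQy].
by exists y; rewrite ?inE ?yP ?yQ // -defB''.
Qed.

(* A symmetric exchange of x in F :\: G against y moves G one step towards F;
   sigma sends x to y. *)
Lemma exch_bij_exists F G : F \in bases M -> G \in bases M ->
  exists sigma, exch_bij M F G sigma.
Proof.
move: {2}#|F :\: G| (erefl #|F :\: G|) => k.
elim: k G => [|k IH] G cardD hF hG.
  move/eqP: cardD; rewrite cards_eq0 setD_eq0 => /(basis_subset_eq hF hG) <-.
  by exists id; split; rewrite ?setDv ?imset0 // => i; rewrite inE.
have [x xD] : exists x, x \in F :\: G by apply/set0Pn; rewrite -card_gt0 cardD.
have [y yD [hFy hGx]] := symmetric_exchange hF hG xD.
move: (xD) (yD); rewrite !inE => /andP[xG xF] /andP[yF yG].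
have DxG' : F :\: (G :\ y :|: [set x]) = (F :\: G) :\ x by rewrite setD_swapr.
have DyG' : (G :\ y :|: [set x]) :\: F = (G :\: F) :\ y by rewrite setD_swapl.
have [|s [injs ims hs]] := IH (G :\ y :|: [set x]) _ hF hGx.
  by rewrite DxG'; move: cardD; rewrite (cardsD1 x) xD => -[].
pose sigma i := if i == x then y else s i.
have sigmaE : {in (F :\: G) :\ x, sigma =1 s}.
  by move=> i; rewrite /sigma in_setD1 => /andP[/negbTE ->].
have defD : F :\: G = x |: (F :\: G) :\ x by rewrite setD1K.
have imsigma : sigma @: ((F :\: G) :\ x) = (G :\: F) :\ y.
  by rewrite (eq_in_imset sigmaE) -DyG' -ims DxG'.
exists sigma; split.
- rewrite defD; apply: injective_setU1; last by rewrite imsigma /sigma eqxx setD11.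
  by move=> i j iD jD; rewrite !sigmaE // => /injs; apply; rewrite DxG'.
- by rewrite defD imsetU1 imsigma /sigma eqxx setD1K.
- move=> i iD; rewrite /sigma; case: eqP => [->|/eqP ix] //.
  by apply: hs; rewrite DxG' in_setD1 ix.
Qed.

End Matroid.

Section Weight.
Variables (n : nat) (g : 'I_n -> nat).
Implicit Types (A B F : {set 'I_n}).

Lemma wt_set1 i : wt g [set i] = g i.
Proof. by rewrite /wt big_set1. Qed.

Lemma wtU A B : [disjoint A & B] -> wt g (A :|: B) = wt g A + wt g B.
Proof.
by move=> dAB; rewrite /wt -(bigU _ _ _ dAB); apply: eq_bigl => i; rewrite inE.
Qed.

Lemma wt_exchange F A B : A \subset F -> [disjoint B & F] ->
  wt g ((F :\: A) :|: B) + wt g A = wt g F + wt g B.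
Proof.
move=> sAF dBF; rewrite wtU; last first.
  by rewrite disjoint_sym (disjointWr (subsetDl F A) dBF).
rewrite /wt (@big_setID _ _ _ _ F A) (setIidPr sAF) /=.
by rewrite addnAC [_ + \sum_(i in A) _]addnC.
Qed.

End Weight.

Section Focal.
Variables (n : nat) (M : matroid n) (l : int) (g : 'I_n -> nat) (F : {set 'I_n}).
Hypotheses (coverg : is_cover M l g) (focalF : focal M l g F).
Implicit Types (A B G : {set 'I_n}).

Lemma focal_wt_le A B : A \subset F -> [disjoint B & F] ->
  (F :\: A) :|: B \in bases M -> wt g A <= wt g B.
Proof.
move=> sAF dBF hB; have := coverg hB; rewrite -focalF.2 lez_nat => leF.
by rewrite -(leq_add2l (wt g F)) -(wt_exchange g sAF dBF) leq_add2r.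
Qed.

Lemma focal_swap_le i j : i \in F -> j \notin F -> F :\ i :|: [set j] \in bases M ->
  g i <= g j.
Proof.
by move=> iF jF; rewrite -!wt_set1; apply: focal_wt_le; rewrite ?sub1set ?disjoints1.
Qed.

Lemma focal_dominated A B : A \subset F -> [disjoint B & F] ->
  (F :\: A) :|: B \in bases M -> forall b, b \in B -> exists2 a, a \in A & g a <= g b.
Proof.
move=> sAF dBF hB b bB.
have bF : b \notin F by rewrite -disjoints1 (disjointWl _ dBF) ?sub1set.
have bD : b \in ((F :\: A) :|: B) :\: F by rewrite !inE bB orbT andbT.
have [a] := symmetric_exchange hB focalF.1 bD.
rewrite !inE negb_or => /andP[/andP[aFA _] aF] [_ hFa].
by exists a; [move: aFA; rewrite aF andbT negbK | exact: focal_swap_le].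
Qed.

Lemma focal_supp A B : A \subset F -> [disjoint B & F] ->
  (F :\: A) :|: B \in bases M -> A \subset supp g -> B \subset supp g.
Proof.
move=> sAF dBF hB sAsupp; apply/subsetP => b bB.
have [a aA le_ab] := focal_dominated sAF dBF hB bB.
by move: (subsetP sAsupp a aA); rewrite !inE => /leq_trans; apply.
Qed.

Lemma focal_exchange G A B : A \subset F :\: G -> B \subset G :\: F ->
  (F :\: A) :|: B \in bases M ->
  wt g A <= wt g B /\ (A \subset supp g -> B \subset supp g).
Proof.
move=> sA sB hB; have sAF := subset_trans sA (subsetDl F G).
have dBF := disjointWl sB (disjoint_setD G F).
by split; [exact: focal_wt_le | exact: focal_supp].
Qed.

Lemma focal_exch_bij_le G sigma : exch_bij M F G sigma ->
  forall i, i \in F :\: G -> g i <= g (sigma i).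
Proof.
case=> _ imsigma hsigma i iD; apply: focal_swap_le (hsigma i iD).
  by move: iD; rewrite inE => /andP[].
by have := imset_f sigma iD; rewrite imsigma inE => /andP[].
Qed.

End Focal.

Section TwoFocal.
Variables (n : nat) (M : matroid n) (l : int) (g : 'I_n -> nat) (F G : {set 'I_n}).
Hypotheses (coverg : is_cover M l g) (focalF : focal M l g F) (focalG : focal M l g G).

Lemma focal_wt_setD : wt g (F :\: G) = wt g (G :\: F).
Proof.
have : wt g F = wt g G by apply/eqP; rewrite -eqz_nat focalF.2 focalG.2.
by rewrite /wt (big_setID G) [in RHS](big_setID F) setIC => /addnI.
Qed.

(* sigma is nondecreasing on F :\: G, yet maps it onto G :\: F, which has the
   same weight. *)
Lemma focal_exch_bij_eq sigma : exch_bij M F G sigma ->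
  forall i, i \in F :\: G -> g i = g (sigma i).
Proof.
move=> hsigma i iD; have le_sigma := focal_exch_bij_le coverg focalF hsigma.
have [injsigma imsigma _] := hsigma.
have sum_eq : \sum_(j in F :\: G) g j = \sum_(j in F :\: G) g (sigma j).
  by rewrite -(big_imset _ injsigma) imsigma; exact: focal_wt_setD.
have := (leqif_sum (fun j jD => leqif_eq (le_sigma j jD))).2.
by rewrite sum_eq eqxx => /esym/forall_inP/(_ i iD)/eqP.
Qed.

End TwoFocal.

Theorem lemma3p3 (n : nat) (M : matroid n) (l : int) (g : 'I_n -> nat)
  (F G : {set 'I_n}) :
  is_cover M l g -> focal M l g F -> G \in bases M ->
  (* (1) *)
  (forall A B : {set 'I_n}, A \subset F :\: G -> B \subset G :\: F ->
     (F :\: A) :|: B \in bases M ->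
     (wt g A <= wt g B)%N /\ (A \subset supp g -> B \subset supp g)) /\
  (* (2): such a bijection exists, and every such bijection is nondecreasing *)
  ((exists sigma, exch_bij M F G sigma) /\
   forall sigma, exch_bij M F G sigma ->
     forall i, i \in F :\: G -> (g i <= g (sigma i))%N) /\
  (focal M l g G ->
   (* (3) *)
   (forall A B : {set 'I_n}, A \subset F :\: G -> B \subset G :\: F ->
      (F :\: A) :|: B \in bases M -> (G :\: B) :|: A \in bases M ->
      wt g A = wt g B /\ (A \subset supp g <-> B \subset supp g)) /\
   (* (4) *)
   (forall sigma, exch_bij M F G sigma ->
      forall i, i \in F :\: G -> g i = g (sigma i))).
Proof.
move=> coverg focalF hG; split=> [A B sA sB hB|].
  exact: (focal_exchange coverg focalF sA sB hB).
split; first split.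
- exact: exch_bij_exists focalF.1 hG.
- by move=> sigma; exact: (focal_exch_bij_le coverg focalF).
move=> focalG; split=> [A B sA sB hFAB hGBA|].
  have [leAB suppAB] := focal_exchange coverg focalF sA sB hFAB.
  have [leBA suppBA] := focal_exchange coverg focalG sB sA hGBA.
  by split; [apply/eqP; rewrite eqn_leq leAB leBA | split].
exact: (focal_exch_bij_eq coverg focalF focalG).
Qed.
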